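(* If $G$ is a nontrivial finite group, then $U(G)=V(G)$ if and only if $G$ is a semi-extraspecial group.
   Context: For a normal subgroup $H$ of $G$, $\mathrm{Irr}(G\mid H)$ is the set of $\chi\in\mathrm{Irr}(G)$ with $H\not\le\ker(\chi)$, and $V(G\mid H)$ is the subgroup generated by all $g\in G$ such that $\chi(g)\ne0$ for some $\chi\in\mathrm{Irr}(G\mid H)$ (with $V(G\mid 1)=1$). For a normal subgroup $N$, $U(G\mid N)$ is the product of all normal subgroups $H$ of $G$ with $V(G\mid H)\le N$, and $U(G)=U(G\mid Z(G))$ (so $U(G)=G$ when $G$ is abelian). $V(G)=V(G\mid G')$, the subgroup generated by all elements on which some nonlinear irreducible character is nonzero. A $p$-group $G$ is semi-extraspecial if $G/N$ is extraspecial for every maximal subgroup $N$ of $Z(G)$. *)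

From HB Require Import structures.
From mathcomp Require Import all_boot all_order all_algebra all_fingroup all_solvable all_field all_character.
Set Implicit Arguments.
Unset Strict Implicit.
Unset Printing Implicit Defensive.
Import GroupScope.
Local Open Scope group_scope.

Section Defs.
Variable gT : finGroupType.

Definition VGrel (G : {group gT}) (H : {set gT}) : {set gT} :=
  << [set g in G | [exists i : Iirr G,
        ~~ (H \subset cfker ('chi[G]_i)%R) && (('chi[G]_i)%R g != 0)%R]] >>.

Definition UGrel (G : {group gT}) (N : {set gT}) : {set gT} :=
  << \bigcup_(H : {group gT} | (H <| G) && (VGrel G H \subset N)) H >>.

Definition UG (G : {group gT}) : {set gT} := UGrel G 'Z(G).
Definition VG (G : {group gT}) : {set gT} := VGrel G (G^`(1)).

Definition extraspecial_pgroup (p : nat) (rT : finGroupType) (A : {set rT}) :=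
  p.-group A /\ extraspecial A.

Definition semi_extraspecial (G : {group gT}) :=
  exists p : nat, [/\ prime p, p.-group G &
    forall N : {group gT}, maximal N 'Z(G) -> extraspecial_pgroup p (G / N)].
End Defs.

From mathcomp Require Import all_boot all_order all_algebra all_fingroup all_solvable all_field all_character.
Set Implicit Arguments.
Unset Strict Implicit.
Unset Printing Implicit Defensive.
Import Order.TTheory GroupScope GRing.Theory Num.Theory.

(* By the second orthogonality relation, the nonlinear irreducible characters
   all vanish at g exactly when |C_G(g)| = |G : G'|, so V(G) is generated by the
   g with |C_G(g)| <> |G : G'|.  Every normal H lies in V(G|H), and V(G|H) = G
   as soon as H is not contained in G'; so for nonabelian G we get
   U(G) <= G' <= V(G) and U(G) <= Z(G) <= V(G), and U(G) = V(G) says exactly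
   that G' = Z(G) = V(G), i.e. G' = Z(G) and [g, G] = Z(G) for all g outside
   Z(G).  In class 2, gN is central in G/N iff [g, G] <= N; this identifies
   Z(G/N) with Z(G)/N for the maximal subgroups N of Z(G), which gives both
   directions of the comparison with semi-extraspecial groups.  The prime p is
   the order of an element g Z(G) of prime order: then Z(G) = [g, G] has
   exponent p because [g, h]^p = [g^p, h] = 1. *)

Section Characters.
Variable gT : finGroupType.
Implicit Types G H : {group gT}.
Local Open Scope ring_scope.

Lemma nonlinear_irr_neq0E G g : g \in G ->
  [exists i : Iirr G, ~~ (G^`(1)%g \subset cfker 'chi[G]_i) && ('chi[G]_i g != 0)]
    = (#|'C_G[g]| != #|G : G^`(1)%g|)%N.
Proof.
move=> Gg; pose nl i := ~~ (G^`(1)%g \subset cfker 'chi[G]_i).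
pose S := \sum_(i | nl i) `|'chi[G]_i g| ^+ 2.
have S_ge0 i : nl i -> 0 <= `|'chi[G]_i g| ^+ 2 by rewrite exprn_ge0.
have cardC : (#|'C_G[g]|%:R : algC) = #|G : G^`(1)%g|%:R + S.
  move: (second_orthogonality_relation g Gg); rewrite class_refl mulr1n => <-.
  rewrite (bigID nl) /= addrC.
  congr (_ + _); last by apply: eq_bigr => i _; rewrite normCK.
  rewrite -card_lin_irr -sum1_card natr_sum.
  apply: eq_big => [i | i]; first by rewrite /nl negbK inE lin_irr_der1.
  by move=> /negbNE; rewrite -lin_irr_der1 => lin; rewrite -normCK normC_lin_char ?expr1n.
rewrite -(eqr_nat algC) cardC -subr_eq0 addrAC subrr add0r.
apply/idP/idP => [/existsP[i /andP[nl_i nz_i]] | nzS].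
  apply: contra nz_i => /eqP S0.
  by rewrite -normr_eq0 -sqrf_eq0 (psumr_eq0P S_ge0 S0 nl_i).
apply: contraNT nzS => /existsPn all0; apply/eqP; rewrite /S big1 // => i nl_i.
by move: (all0 i); rewrite -/(nl i) nl_i negbK => /eqP ->; rewrite normr0 expr0n.
Qed.

(* The regular character vanishes at [h != 1], while the constituents with [H]
   in their kernel contribute [\sum chi(1)^2 > 0] there. *)
Lemma irr_not_ker_neq0 G H h : H <| G -> h \in H -> h != 1%g ->
  [exists i : Iirr G, ~~ (H \subset cfker 'chi[G]_i) && ('chi[G]_i h != 0)].
Proof.
move=> nsHG Hh ntg; apply: contraNT ntg => /existsPn all0.
pose S := \sum_(i | H \subset cfker 'chi[G]_i) 'chi[G]_i 1%g ^+ 2.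
have S_ge0 i : H \subset cfker 'chi[G]_i -> 0 <= 'chi[G]_i 1%g ^+ 2.
  by move=> _; rewrite exprn_ge0 // ltW ?irr1_gt0.
have regS : cfReg G h = S.
  rewrite cfReg_sum sum_cfunE (bigID (fun i => H \subset cfker 'chi[G]_i)) /=.
  rewrite [X in _ + X]big1 ?addr0 => [|i nk]; last first.
    by move: (all0 i); rewrite nk negbK cfunE => /eqP ->; rewrite mulr0.
  apply: eq_bigr => i kerH; rewrite cfunE expr2; congr (_ * _).
  by rewrite -[h]mulg1 cfkerMl // (subsetP kerH).
apply: contraT => ntg.
have S0 : S = 0 by rewrite -regS cfRegE (negPf ntg).
move: (psumr_eq0P S_ge0 S0 (i := 0)); rewrite cfker_irr0 normal_sub // => /(_ isT)/eqP.
by rewrite sqrf_eq0 (negPf (irr1_neq0 0)).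
Qed.

Lemma lin_irr_not_ker G H : ~~ (H \subset G^`(1))%g ->
  exists2 i : Iirr G, 'chi[G]_i \is a linear_char & ~~ (H \subset cfker 'chi[G]_i).
Proof.
move=> not_sHG'; apply/exists_inP; apply: contraR not_sHG' => /exists_inPn kerH.
rewrite -cap_cfker_lin_irr; apply/bigcapsP => i lin.
by move: (kerH i lin); rewrite negbK.
Qed.

End Characters.

Section UVSubgroups.
Variable gT : finGroupType.
Implicit Types G H N : {group gT}.

Lemma VGrel_sub G (A : {set gT}) : VGrel G A \subset G.
Proof. by rewrite gen_subG; apply/subsetP => g; rewrite inE => /andP[]. Qed.

Lemma VGrel1 G : VGrel G 1 = 1.
Proof.
apply/trivgP; rewrite gen_subG; apply/subsetP => g.
by rewrite inE => /andP[_ /existsP[i]]; rewrite sub1G.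
Qed.

Lemma normal_sub_VGrel G H : H <| G -> H \subset VGrel G H.
Proof.
move=> nsHG; apply/subsetP => h Hh; have [-> | nt_h] := eqVneq h 1; first exact: group1.
by apply: mem_gen; rewrite inE (subsetP (normal_sub nsHG)) // irr_not_ker_neq0.
Qed.

Lemma VGrel_full G H : ~~ (H \subset G^`(1)) -> VGrel G H = G.
Proof.
move=> not_sHG'; have [i lin kerH] := lin_irr_not_ker not_sHG'.
apply/eqP; rewrite eqEsubset VGrel_sub; apply/subsetP => g Gg.
by apply: mem_gen; rewrite inE Gg; apply/existsP; exists i; rewrite kerH lin_char_neq0.
Qed.

Lemma VGE G : VG G = <<[set g in G | #|'C_G[g]| != #|G : G^`(1)|]>>.
Proof.
congr <<_>>; apply/setP => g; rewrite !inE; case Gg: (g \in G) => //=.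
exact: nonlinear_irr_neq0E.
Qed.

Lemma der_sub_VG G : G^`(1) \subset VG G.
Proof. exact: normal_sub_VGrel (der_normal 1 G). Qed.

Lemma center_sub_VG G : ~~ abelian G -> 'Z(G) \subset VG G.
Proof.
move=> not_abG; rewrite VGE; apply/subsetP => z /setIP[Gz cGz]; apply: mem_gen.
rewrite inE Gz (setIidPl _ : 'C_G[z] = G) ?sub_cent1 //.
rewrite -(Lagrange (der_sub 1 G)) -[X in _ != X]mul1n eqn_pmul2r ?indexg_gt0 //.
by rewrite /= -trivg_card1; apply: contra not_abG => /eqP/derG1P.
Qed.

Lemma sub_UGrel G N H : H <| G -> VGrel G H \subset N -> H \subset UGrel G N.
Proof. by move=> nsHG sVN; rewrite sub_gen // (bigcup_sup H) ?nsHG. Qed.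

Lemma UGrel_sub G N : UGrel G N \subset N.
Proof.
rewrite gen_subG; apply/bigcupsP => H /andP[nsHG sVN].
exact: subset_trans (normal_sub_VGrel nsHG) sVN.
Qed.

Lemma UG_sub_der G : ~~ abelian G -> UG G \subset G^`(1).
Proof.
move=> not_abG; rewrite gen_subG; apply/bigcupsP => H /andP[_ sVZ].
apply: contraR not_abG => not_sHG'.
by rewrite /abelian -{1}(VGrel_full not_sHG') (subset_trans sVZ) ?subsetIr.
Qed.

End UVSubgroups.

Section ClassTwo.
Variable gT : finGroupType.
Implicit Types G N : {group gT}.

(* By [class2_classE] below, the second condition says [g ^: G = g *: 'Z(G)]:
   these are the Camina groups of nilpotency class 2. *)
Definition class2_camina G :=
  G^`(1) = 'Z(G) /\ {in G :\: 'Z(G), forall g, [~: [set g], G] = 'Z(G)}.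

Lemma der1_center_nonabelian G : G :!=: 1 -> G^`(1) = 'Z(G) -> ~~ abelian G.
Proof.
move=> ntG G'Z; apply: contra ntG => abG.
by rewrite -(center_idP abG) -G'Z (derG1P abG).
Qed.

Lemma class2_commXg G a h n : G^`(1) \subset 'Z(G) -> a \in G -> h \in G ->
  [~ a ^+ n, h] = [~ a, h] ^+ n.
Proof.
move=> sG'Z Ga Gh; have /centerP[_ cZah] : [~ a, h] \in 'Z(G).
  by rewrite (subsetP sG'Z) // derg1 mem_commg.
by apply: commXg; apply/commute_sym/cZah.
Qed.

Lemma class2_commg1E G g : G^`(1) \subset 'Z(G) -> g \in G ->
  [~: [set g], G] = [set [~ g, h] | h in G].
Proof.
move=> sG'Z Gg; rewrite /commutator /commg_set imset2_set1l gen_set_id //.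
apply/group_setP; split; first by apply/imsetP; exists 1; rewrite ?commg1.
move=> _ _ /imsetP[a Ga ->] /imsetP[b Gb ->]; apply/imsetP.
exists (b * a); first exact: groupM.
have /centerP[_ cZgb] : [~ g, b] \in 'Z(G).
  by rewrite (subsetP sG'Z) // derg1 mem_commg.
by rewrite commgMJ (conjg_fixP _) //; apply/commgP/cZgb.
Qed.

Lemma class2_classE G g : G^`(1) \subset 'Z(G) -> g \in G ->
  g ^: G = g *: [~: [set g], G].
Proof.
move=> sG'Z Gg; rewrite class2_commg1E // -lcosetE /lcoset -imset_comp.
by apply: eq_imset => h; rewrite conjg_mulR.
Qed.

Lemma class2_commg1_eq_der G g : G^`(1) \subset 'Z(G) -> g \in G ->
  ([~: [set g], G] == G^`(1)) = (#|'C_G[g]| == #|G : G^`(1)|).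
Proof.
move=> sG'Z Gg.
have sTG' : [~: [set g], G] \subset G^`(1) by rewrite derg1 commgSS ?sub1set.
have cardT : #|[~: [set g], G]| = #|G : 'C_G[g]|.
  by rewrite index_cent1 class2_classE // card_lcoset.
have idx : (#|G : 'C_G[g]| == #|G^`(1)|) = (#|'C_G[g]| == #|G : G^`(1)|).
  rewrite -(eqn_pmul2l (cardG_gt0 'C_G[g])) Lagrange ?subcent1_sub //.
  by rewrite -(Lagrange (der_sub 1 G)) mulnC eqn_pmul2r // eq_sym.
rewrite -idx -cardT; apply/eqP/eqP => [-> // | eqTG'].
by apply/eqP; rewrite eqEcard sTG' eqTG' /=.
Qed.

Lemma coset_center_commg G N g : G \subset 'N(N) -> g \in G ->
  (coset N g \in 'Z(G / N)) = ([~: [set g], G] \subset N).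
Proof.
move=> nNG Gg; have Ng := subsetP nNG g Gg.
rewrite -sub1set -quotient_set1 // -quotient_cents2 ?sub1set //.
by rewrite subsetI quotientS ?sub1set.
Qed.

Lemma quotient_center_eqP G N : N \subset 'Z(G) ->
  'Z(G / N) = 'Z(G) / N <-> {in G :\: 'Z(G), forall g, ~~ ([~: [set g], G] \subset N)}.
Proof.
move=> sNZ; have nsNG := sub_center_normal sNZ; have nNG := normal_norm nsNG.
split=> [ZGN g /setDP[Gg notZg] | noncentral].
  apply: contra notZg; rewrite -coset_center_commg // ZGN => ZGNg.
  by rewrite -(quotientGK (normalS sNZ (center_sub G) nsNG)) mem_morphpre ?(subsetP nNG).
apply/eqP; rewrite eqEsubset morphim_center andbT; apply/subsetP => y ZGNy.
have /morphimP[a _ Ga def_y] := subsetP (center_sub _) y ZGNy.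
rewrite def_y in ZGNy *; apply: mem_quotient; apply: contraTT ZGNy => notZa.
by rewrite coset_center_commg // noncentral // inE notZa.
Qed.

End ClassTwo.

Section SemiExtraspecial.
Variable gT : finGroupType.
Implicit Types G N : {group gT}.

Lemma UG_eq_VG_iff G : G :!=: 1 ->
  UG G = VG G <-> G^`(1) = 'Z(G) /\ VG G = 'Z(G).
Proof.
move=> ntG; split=> [UV | [G'Z VZ]].
  have not_abG : ~~ abelian G.
    apply: contra ntG => abG; have VG1 : VG G = 1 by rewrite /VG (derG1P abG) VGrel1.
    rewrite -subG1 -VG1 -UV; apply: sub_UGrel (normal_refl G) _.
    by rewrite /= (center_idP abG) VGrel_sub.
  have UG' : UG G = G^`(1) by apply/eqP; rewrite eqEsubset UG_sub_der // UV der_sub_VG.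
  have G'Z : G^`(1) = 'Z(G).
    by apply/eqP; rewrite eqEsubset -{1}UG' UGrel_sub -UG' UV center_sub_VG.
  by rewrite -UV UG'.
have VZZ : VGrel G 'Z(G) = 'Z(G) by rewrite -{1}G'Z.
apply/eqP; rewrite eqEsubset VZ UGrel_sub.
by rewrite sub_UGrel ?center_normal ?VZZ.
Qed.

Lemma VG_eq_center_iff G : G :!=: 1 -> G^`(1) = 'Z(G) ->
  VG G = 'Z(G) <-> {in G :\: 'Z(G), forall g, [~: [set g], G] = 'Z(G)}.
Proof.
move=> ntG G'Z; have not_abG := der1_center_nonabelian ntG G'Z.
have sG'Z : G^`(1) \subset 'Z(G) by rewrite G'Z.
have commg1_eqZ g : g \in G ->
    ([~: [set g], G] == 'Z(G)) = (#|'C_G[g]| == #|G : G^`(1)|).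
  by rewrite -{1}G'Z; apply: class2_commg1_eq_der.
split=> [VZ g /setDP[Gg notZg] | camina].
  apply/eqP; rewrite commg1_eqZ //; apply: contraR notZg => ne.
  by rewrite -VZ VGE mem_gen // inE Gg.
apply/eqP; rewrite eqEsubset center_sub_VG // andbT VGE gen_subG.
apply/subsetP => g; rewrite inE => /andP[Gg]; apply: contraR => notZg.
by rewrite -commg1_eqZ // camina // inE notZg.
Qed.

Lemma UG_eq_VG_camina G : G :!=: 1 -> UG G = VG G <-> class2_camina G.
Proof.
move=> ntG; split=> [/(UG_eq_VG_iff ntG)[G'Z VZ] | [G'Z camina]].
  by split=> //; apply/(VG_eq_center_iff ntG G'Z).
by apply/(UG_eq_VG_iff ntG); split=> //; apply/(VG_eq_center_iff ntG G'Z).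
Qed.

Lemma semi_extraspecial_camina G :
  G :!=: 1 -> semi_extraspecial G -> class2_camina G.
Proof.
move=> ntG [p [p_pr pG maxZ_es]].
have pZ : p.-group 'Z(G) := pgroupS (center_sub G) pG.
have ZGN N : maximal N 'Z(G) -> 'Z(G / N) = 'Z(G) / N.
  move=> maxN; have sNZ := proper_sub (maxgroupp maxN).
  have nNZ := subset_trans (center_sub G) (normal_norm (sub_center_normal sNZ)).
  have [pGN esGN] := maxZ_es N maxN.
  apply/esym/eqP; rewrite eqEcard morphim_center (card_center_extraspecial pGN esGN).
  by rewrite /= card_quotient // (p_maximal_index pZ maxN).
have sG'Z : G^`(1) \subset 'Z(G).
  have ntZ : 'Z(G) != 1 by rewrite center_nil_eq1 ?(pgroup_nil pG).
  have [Z1 | [N maxN _]] := maximal_exists (sub1G 'Z(G)).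
    by rewrite -Z1 eqxx in ntZ.
  have sNZ := proper_sub (maxgroupp maxN).
  have [_ [[_ derGN] _]] := maxZ_es N maxN.
  have nNG := normal_norm (sub_center_normal sNZ).
  by rewrite -(quotientSGK (subset_trans (der_sub 1 G) nNG) sNZ) quotient_der // derGN ZGN.
split=> [|g GnotZg].
  have [// | [N maxN sG'N]] := maximal_exists sG'Z.
  have [_ [[_ derGN] prZGN]] := maxZ_es N maxN.
  have nNG := normal_norm (sub_center_normal (proper_sub (maxgroupp maxN))).
  by move: prZGN; rewrite -derGN -quotient_der // (quotientS1 sG'N) cards1.
have [Gg _] := setDP GnotZg.
have sTZ : [~: [set g], G] \subset 'Z(G).
  by apply: subset_trans sG'Z; rewrite derg1 commgSS ?sub1set.
have [// | [N maxN sTN]] := maximal_exists sTZ.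
have sNZ := proper_sub (maxgroupp maxN).
by case/negP: ((quotient_center_eqP sNZ).1 (ZGN N maxN) g GnotZg).
Qed.

Lemma camina_center_exponent G : G :!=: 1 -> class2_camina G ->
  exists2 p, prime p & {in 'Z(G), forall z, z ^+ p = 1}.
Proof.
move=> ntG [G'Z camina]; have not_abG := der1_center_nonabelian ntG G'Z.
have sG'Z : G^`(1) \subset 'Z(G) by rewrite G'Z.
have nZG := normal_norm (center_normal G).
have ntGZ : 1 < #|G / 'Z(G)|.
  rewrite cardG_gt1; apply: contra not_abG => /eqP GZ1.
  by apply: subset_trans (subsetIr G 'C(G)); rewrite -(quotient_sub1 nZG) GZ1.
have p_pr := pdiv_prime ntGZ; set p := pdiv _ in p_pr *.
have [x GZx ox] := Cauchy p_pr (pdiv_dvd _).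
have /morphimP[g _ Gg def_x] := GZx; have {}def_x : x = coset 'Z(G) g by [].
have GnotZg : g \in G :\: 'Z(G).
  rewrite inE Gg andbT; apply: contraL (prime_gt1 p_pr) => Zg.
  by rewrite -ox def_x coset_id // order1.
have Zgp : g ^+ p \in 'Z(G).
  apply: coset_idr; first by rewrite groupX ?(subsetP nZG).
  have -> : coset 'Z(G) (g ^+ p) = x ^+ p by rewrite def_x morphX ?(subsetP nZG).
  by rewrite -ox expg_order.
exists p => // z; rewrite -(camina g GnotZg) class2_commg1E // => /imsetP[h Gh ->].
have /centerP[_ cZgp] := Zgp.
by rewrite -(class2_commXg p sG'Z Gg Gh); apply/eqP/commgP/cZgp.
Qed.

Lemma camina_semi_extraspecial G :
  G :!=: 1 -> class2_camina G -> semi_extraspecial G.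
Proof.
move=> ntG camG; have [G'Z camina] := camG.
have sG'Z : G^`(1) \subset 'Z(G) by rewrite G'Z.
have [p p_pr expZ] := camina_center_exponent ntG camG.
have powZ a : a \in G -> a ^+ p \in 'Z(G).
  move=> Ga; apply/centerP; split=> [|h Gh]; first exact: groupX.
  apply/commgP; rewrite (class2_commXg p sG'Z Ga Gh) expZ //.
  by rewrite (subsetP sG'Z) // derg1 mem_commg.
have pG : p.-group G.
  apply/pgroupP => q q_pr qG; have [a Ga oa] := Cauchy q_pr qG.
  have : #[a] %| p * p by rewrite order_dvdn expgM expZ ?powZ.
  by rewrite oa Euclid_dvdM // orbb dvdn_prime2.
have PhiZ : 'Phi(G) = 'Z(G).
  apply/eqP; rewrite eqEsubset (Phi_joing pG) -{2}G'Z joing_subl andbT join_subG sG'Z /=.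
  rewrite (MhoE 1 pG) gen_subG; apply/subsetP => _ /imsetP[a Ga ->].
  by rewrite expn1 powZ.
have pZ : p.-group 'Z(G) := pgroupS (center_sub G) pG.
exists p; split=> // N maxN.
have sNZ := proper_sub (maxgroupp maxN).
have nNG := normal_norm (sub_center_normal sNZ).
have ZGN : 'Z(G / N) = 'Z(G) / N.
  apply/(quotient_center_eqP sNZ) => g /camina ->.
  by have := maxgroupp maxN; rewrite properE => /andP[].
split; first exact: quotient_pgroup.
split; first split.
- by rewrite -(quotient_Phi pG nNG) PhiZ ZGN.
- by rewrite -quotient_der // G'Z ZGN.
by rewrite ZGN card_quotient ?(p_maximal_index pZ maxN) // (subset_trans (center_sub G)).
Qed.

End SemiExtraspecial.

Theorem lemma6p3 (gT : finGroupType) (G : {group gT}) :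
  G :!=: 1%G -> (UG G = VG G <-> semi_extraspecial G).
Proof.
move=> ntG; apply: iff_trans (UG_eq_VG_camina ntG) _.
by split; [exact: camina_semi_extraspecial | exact: semi_extraspecial_camina].
Qed.
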